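(* Let $A\in\mathbb{C}^{m\times m}$ be Hermitian positive semidefinite, let $B\in\mathbb{C}^{m\times k}$ be such that $B^*$ has full column rank (so $BB^*$ is positive definite), and let \[ H=\begin{bmatrix} A & B\\ B^* & 0\end{bmatrix}. \] Let $\alpha=\sup_{x\neq0}\dfrac{x^*Ax}{x^*\sqrt{BB^*}x}$ and $\beta_1=\min_{\|x\|=1}\|B^*x\|$. Then \[ \left(\frac{-2\beta_1}{\alpha+\sqrt{\alpha^2+4}},\ \beta_1\right)\setminus\{0\}\subseteq\rho(H). \]
   Context: $\rho(H)$ denotes the resolvent set of $H$ (the complement of its spectrum); $\sqrt{BB^*}$ is the positive definite square root. *)

From mathcomp Require Import all_boot all_order all_algebra.
From mathcomp Require Import complex reals.
Set Implicit Arguments. Unset Strict Implicit. Unset Printing Implicit Defensive.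
Import Order.TTheory GRing.Theory Num.Theory.
Local Open Scope ring_scope.

Definition ctmx (C : numClosedFieldType) m n (M : 'M[C]_(m, n)) : 'M[C]_(n, m) :=
  (map_mx (fun z => z^*) M)^T.

Definition qform (C : numClosedFieldType) n (M : 'M[C]_n) (x : 'cV[C]_n) : C :=
  (ctmx x *m M *m x) 0 0.

Definition hermitian (C : numClosedFieldType) n (M : 'M[C]_n) : Prop := ctmx M = M.

Definition psd (C : numClosedFieldType) n (M : 'M[C]_n) : Prop :=
  hermitian M /\ forall x : 'cV[C]_n, 0 <= qform M x.

Definition pd (C : numClosedFieldType) n (M : 'M[C]_n) : Prop :=
  hermitian M /\ forall x : 'cV[C]_n, x != 0 -> 0 < qform M x.

Definition vnorm (R : realType) n (x : 'cV[R[i]]_n) : R :=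
  Num.sqrt (complex.Re (qform 1%:M x)).

Definition resolvent (C : numClosedFieldType) n (H : 'M[C]_n) : pred C :=
  fun z => (H - z%:M) \in unitmx.

Definition saddle (C : numClosedFieldType) m k (A : 'M[C]_m) (B : 'M[C]_(m, k))
  : 'M[C]_(m + k) := block_mx A B (ctmx B) 0.

Definition is_sqrtm (C : numClosedFieldType) n (M S : 'M[C]_n) : Prop :=
  pd S /\ S *m S = M.

Definition is_sup_nonzero (R : realType) n (f : 'cV[R[i]]_n -> R) (a : R) : Prop :=
  (forall x, x != 0 -> f x <= a) /\
  (forall b, (forall x, x != 0 -> f x <= b) -> a <= b).

Definition is_min_unit (R : realType) n (g : 'cV[R[i]]_n -> R) (b : R) : Prop :=
  (exists2 x, vnorm x = 1 & g x = b) /\ (forall x, vnorm x = 1 -> b <= g x).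

From mathcomp Require Import all_boot all_order all_algebra.
From mathcomp Require Import complex reals ring lra.
Import Order.TTheory GRing.Theory Num.Theory.
Local Open Scope ring_scope.
Set Implicit Arguments. Unset Strict Implicit. Unset Printing Implicit Defensive.

(* If H - t is singular for real t <> 0, a left null vector (z^*, y) of it gives
   t z^*Az + |B^*z|^2 = t^2 |z|^2 with z <> 0.  For t > 0 the left side is at
   least |B^*z|^2 >= beta1^2 |z|^2 > t^2 |z|^2.  For t = -s < 0, the bounds
   z^*Az <= alpha z^*Sz <= alpha |z| |Sz| and |Sz| = |B^*z| show that
   b = |B^*z| satisfies b^2 <= s^2 a^2 + s alpha a b with a = |z|, so b is at
   most the positive root s a (alpha + sqrt(alpha^2 + 4)) / 2, which the lower
   end of the interval makes smaller than beta1 a <= b. *)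

Section Adjoint.
Variable C : numClosedFieldType.

Lemma ctmxK m n (M : 'M[C]_(m, n)) : ctmx (ctmx M) = M.
Proof. by apply/matrixP => i j; rewrite !mxE conjCK. Qed.

Lemma ctmx0 m n : ctmx (0 : 'M[C]_(m, n)) = 0.
Proof. by apply/matrixP => i j; rewrite !mxE rmorph0. Qed.

Lemma ctmxB m n (M N : 'M[C]_(m, n)) : ctmx (M - N) = ctmx M - ctmx N.
Proof. by apply/matrixP => i j; rewrite !mxE rmorphB. Qed.

Lemma ctmxZ m n a (M : 'M[C]_(m, n)) : ctmx (a *: M) = a^* *: ctmx M.
Proof. by apply/matrixP => i j; rewrite !mxE rmorphM. Qed.

Lemma ctmxM m n p (M : 'M[C]_(m, n)) (N : 'M[C]_(n, p)) :
  ctmx (M *m N) = ctmx N *m ctmx M.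
Proof.
apply/matrixP => i j; rewrite !mxE rmorph_sum; apply: eq_bigr => l _.
by rewrite !mxE rmorphM mulrC.
Qed.

Definition cdot n (x y : 'cV[C]_n) : C := (ctmx x *m y) 0 0.

Lemma qformE n (M : 'M[C]_n) x : qform M x = cdot x (M *m x).
Proof. by rewrite /qform /cdot mulmxA. Qed.

Lemma cdotC n (x y : 'cV[C]_n) : cdot y x = (cdot x y)^*.
Proof.
rewrite /cdot !mxE rmorph_sum; apply: eq_bigr => i _.
by rewrite !mxE rmorphM /= conjCK mulrC.
Qed.

Lemma cdot0l n (y : 'cV[C]_n) : cdot 0 y = 0.
Proof. by rewrite /cdot ctmx0 mul0mx mxE. Qed.

Lemma cdotBZ n (a b : C) (x y : 'cV[C]_n) :
  cdot (a *: x - b *: y) (a *: x - b *: y) =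
  a^* * a * cdot x x - a^* * b * cdot x y - b^* * a * cdot y x
  + b^* * b * cdot y y.
Proof.
rewrite /cdot ctmxB !ctmxZ mulmxBl !mulmxBr -!scalemxAl -!scalemxAr !scalerA.
by rewrite !mxE; ring.
Qed.

Lemma cdot_self n (x : 'cV[C]_n) : cdot x x = \sum_i `|x i 0| ^+ 2.
Proof. by rewrite /cdot mxE; apply: eq_bigr => i _; rewrite !mxE normCK mulrC. Qed.

Lemma cdot_self_ge0 n (x : 'cV[C]_n) : 0 <= cdot x x.
Proof. by rewrite cdot_self sumr_ge0 // => i _; rewrite exprn_ge0. Qed.

Lemma cdot_self_eq0 n (x : 'cV[C]_n) : (cdot x x == 0) = (x == 0).
Proof.
apply/idP/eqP => [|->]; last by rewrite cdot0l.
rewrite cdot_self psumr_eq0 => [/allP x0|i _]; last by rewrite exprn_ge0.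
apply/matrixP => i j; rewrite ord1 mxE.
by have := x0 i (mem_index_enum i); rewrite expf_eq0 normr_eq0 => /eqP.
Qed.

Lemma qform1_mul m n (M : 'M[C]_(m, n)) (x : 'cV[C]_n) :
  qform 1%:M (M *m x) = qform (ctmx M *m M) x.
Proof. by rewrite /qform mulmx1 ctmxM !mulmxA. Qed.

Lemma saddle_shift_singular m k (A : 'M[C]_m) (B : 'M[C]_(m, k)) (t : C) :
  t != 0 -> saddle A B - t%:M \notin unitmx ->
  exists2 z : 'cV[C]_m, z != 0 &
    t * qform A z + qform 1%:M (ctmx B *m z) = t ^+ 2 * qform 1%:M z.
Proof.
move=> t_neq0; rewrite unitmxE unitfE negbK => /det0P[v].
rewrite -[v]hsubmxK -[lsubmx v]ctmxK; move: (ctmx (lsubmx v)) (rsubmx v) => z y.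
move=> v_neq0; rewrite mulmxBr mul_mx_scalar /saddle mul_row_block scale_row_mx.
rewrite opp_row_mx add_row_mx mulmx0 addr0 -row_mx0 => /eq_row_mx[].
move=> /eqP; rewrite subr_eq0 => /eqP row1 /eqP; rewrite subr_eq0 => /eqP row2.
exists z.
  apply: contraNneq v_neq0 => z0; move: row2; rewrite z0 ctmx0 mul0mx.
  by move=> /esym/eqP; rewrite scaler_eq0 (negbTE t_neq0) => /eqP->; rewrite row_mx0.
rewrite /qform ctmxM ctmxK mulmx1 -!trace_mx11 -!mxtraceZ -mxtraceD; congr (\tr _).
rewrite mulmxA row2 -!scalemxAl -scalerDr -!mulmxDl row1 -scalemxAl.
by rewrite mulmx1 scalerA expr2.
Qed.

End Adjoint.

Section RealGap.
Variable R : rcfType.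

Lemma ltr_norm_sqrt_sqrD4 (x : R) : `|x| < Num.sqrt (x ^+ 2 + 4).
Proof. by rewrite -sqrtr_sqr ltr_sqrt ?ltrDl // ltr_wpDl ?sqr_ge0. Qed.

Lemma sqr_gt_above_root (s alpha a b : R) : 0 < s -> 0 < a ->
  s * (alpha + Num.sqrt (alpha ^+ 2 + 4)) * a < 2 * b ->
  s ^+ 2 * a ^+ 2 + s * alpha * (a * b) < b ^+ 2.
Proof.
have /ltr_normlP[] := ltr_norm_sqrt_sqrD4 alpha.
have : Num.sqrt (alpha ^+ 2 + 4) ^+ 2 = alpha ^+ 2 + 4.
  by rewrite sqr_sqrtr // addr_ge0 ?sqr_ge0.
move: (Num.sqrt _) => r r_sqr alpha_gt_Nr alpha_lt_r s_gt0 a_gt0 b_gt.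
have sa_gt0 : 0 < s * a by rewrite mulr_gt0.
have root_gt0 : 0 < 2 * b - s * (alpha + r) * a by rewrite subr_gt0.
have cofactor_gt0 : 0 < 2 * b + s * (r - alpha) * a.
  have : 0 < (alpha + r) * (s * a) by apply: mulr_gt0 => //; lra.
  have : 0 < (r - alpha) * (s * a) by apply: mulr_gt0 => //; lra.
  lra.
(* the product of the two factors is 4 (b^2 - s alpha a b - s^2 a^2) *)
have := mulr_gt0 root_gt0 cofactor_gt0.
nra.
Qed.

Lemma saddle_real_gap (alpha beta t a b q : R) :
  0 < a -> 0 <= q -> q <= alpha * (a * b) -> beta * a <= b ->
  t * q + b ^+ 2 = t ^+ 2 * a ^+ 2 ->
  (-2 * beta) / (alpha + Num.sqrt (alpha ^+ 2 + 4)) < t < beta -> t != 0 ->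
  False.
Proof.
move=> a_gt0 q_ge0 q_le b_ge eq_tq /andP[t_gt t_lt] t_neq0.
have [t_gt0|t_le0] := ltrP 0 t.
  have ta_lt_b : t * a < b by apply: lt_le_trans b_ge; rewrite ltr_pM2r.
  have : 0 <= t * q by rewrite mulr_ge0 // ltW.
  have : t * a * (t * a) < b * b.
    by apply: ltr_pM => //; rewrite mulr_ge0 // ltW.
  nra.
have t_lt0 : t < 0 by rewrite lt_neqAle t_neq0.
have D_gt0 : 0 < alpha + Num.sqrt (alpha ^+ 2 + 4).
  by have /ltr_normlP[] := ltr_norm_sqrt_sqrD4 alpha; lra.
move: t_gt; rewrite ltr_pdivrMr // => t_gt.
have : - t * (alpha + Num.sqrt (alpha ^+ 2 + 4)) * a < 2 * b.
  have : - t * (alpha + Num.sqrt (alpha ^+ 2 + 4)) * a < 2 * beta * a.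
    by rewrite ltr_pM2r //; lra.
  lra.
move=> /(sqr_gt_above_root _ a_gt0); rewrite oppr_gt0 => /(_ t_lt0).
have : - t * q <= - t * (alpha * (a * b)) by rewrite ler_pM2l // oppr_gt0.
nra.
Qed.

End RealGap.

Section EuclideanNorm.
Variable R : realType.
Local Notation C := R[i].
Local Notation Re := (@complex.Re R).

Lemma ReD (u w : C) : Re (u + w) = Re u + Re w.
Proof. exact: (raddfD (Re : Rcomplex R -> R)). Qed.

Lemma ReN (w : C) : Re (- w) = - Re w.
Proof. exact: (raddfN (Re : Rcomplex R -> R)). Qed.

Lemma ReJ (w : C) : Re w^* = Re w.
Proof. by case: w. Qed.

Lemma Re_realM (x : R) (w : C) : Re (x%:C * w)%C = x * Re w.
Proof. by case: w => a b /=; rewrite mul0r subr0. Qed.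

Lemma Re_ge0 (w : C) : 0 <= w -> 0 <= Re w.
Proof. by rewrite lecE => /andP[]. Qed.

Lemma Re_gt0 (w : C) : 0 < w -> 0 < Re w.
Proof. by rewrite ltcE => /andP[]. Qed.

Lemma ge0_ReK (w : C) : 0 <= w -> (Re w)%:C%C = w.
Proof. by case: w => a b; rewrite lecE /= => /andP[/eqP -> _]. Qed.

Lemma conj_realC (x : R) : (x%:C%C : C)^* = x%:C%C.
Proof. by apply/eqP; rewrite eq_complex /= oppr0 !eqxx. Qed.

Lemma vnorm_sqr n (x : 'cV[C]_n) : vnorm x ^+ 2 = Re (cdot x x).
Proof. by rewrite /vnorm qformE mul1mx sqr_sqrtr // Re_ge0 // cdot_self_ge0. Qed.

Lemma cdot_self_vnorm n (x : 'cV[C]_n) : cdot x x = (vnorm x ^+ 2)%:C%C.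
Proof. by rewrite vnorm_sqr ge0_ReK // cdot_self_ge0. Qed.

Lemma vnorm_gt0 n (x : 'cV[C]_n) : x != 0 -> 0 < vnorm x.
Proof.
rewrite -cdot_self_eq0 => x_neq0; rewrite sqrtr_gt0 qformE mul1mx Re_gt0 //.
by rewrite lt_def x_neq0 cdot_self_ge0.
Qed.

Lemma vnorm_subZ_sqr n (a b : R) (x y : 'cV[C]_n) :
  vnorm (a%:C%C *: x - b%:C%C *: y) ^+ 2 =
  a ^+ 2 * vnorm x ^+ 2 - 2 * a * b * Re (cdot x y) + b ^+ 2 * vnorm y ^+ 2.
Proof.
rewrite !vnorm_sqr cdotBZ (cdotC x y) !conj_realC -!rmorphM.
by rewrite !ReD !ReN !Re_realM ReJ; ring.
Qed.

Lemma vnormZ n (a : R) (x : 'cV[C]_n) : vnorm (a%:C%C *: x) = `|a| * vnorm x.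
Proof.
have h := vnorm_subZ_sqr a 0 x x.
rewrite scale0r subr0 !(mulr0, mul0r, expr0n) subr0 addr0 in h.
rewrite -[LHS]ger0_norm ?sqrtr_ge0 // -sqrtr_sqr h sqrtrM ?sqr_ge0 // !sqrtr_sqr.
by rewrite [`|vnorm x|]ger0_norm ?sqrtr_ge0.
Qed.

Lemma vnorm0 n : vnorm (0 : 'cV[C]_n) = 0.
Proof. by rewrite /vnorm qformE mulmx0 cdot0l sqrtr0. Qed.

Lemma Re_cdot_le n (x y : 'cV[C]_n) : Re (cdot x y) <= vnorm x * vnorm y.
Proof.
have [->|x_neq0] := eqVneq x 0; first by rewrite cdot0l vnorm0 mul0r.
have [->|y_neq0] := eqVneq y 0.
  by rewrite (cdotC 0) cdot0l rmorph0 vnorm0 mulr0.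
have xy_gt0 : 0 < vnorm x * vnorm y by rewrite mulr_gt0 ?vnorm_gt0.
have := sqr_ge0 (vnorm ((vnorm y)%:C%C *: x - (vnorm x)%:C%C *: y)).
by rewrite vnorm_subZ_sqr; nra.
Qed.

Lemma vnorm_mulmx_eq m1 m2 n (M1 : 'M[C]_(m1, n)) (M2 : 'M[C]_(m2, n)) x :
  ctmx M1 *m M1 = ctmx M2 *m M2 -> vnorm (M1 *m x) = vnorm (M2 *m x).
Proof. by move=> eqM; rewrite /vnorm !qform1_mul eqM. Qed.

Lemma is_min_unit_vnorm_le m n (M : 'M[C]_(m, n)) (b : R) (x : 'cV[C]_n) :
  is_min_unit (fun y => vnorm (M *m y)) b -> b * vnorm x <= vnorm (M *m x).
Proof.
move=> [_ b_min]; have [->|x_neq0] := eqVneq x 0.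
  by rewrite mulmx0 !vnorm0 mulr0.
have x_gt0 := vnorm_gt0 x_neq0.
have := b_min ((vnorm x)^-1%:C%C *: x).
rewrite -scalemxAr !vnormZ ger0_norm ?invr_ge0 ?(ltW x_gt0) // mulVf ?gt_eqF //.
by move=> /(_ erefl); rewrite mulrC ler_pdivlMr.
Qed.

End EuclideanNorm.

Theorem mainTheorem10 (R : realType) (m k : nat)
    (A : 'M[R[i]]_m) (B : 'M[R[i]]_(m, k)) (S : 'M[R[i]]_m) (alpha beta1 : R) :
  psd A ->
  \rank (ctmx B) = m ->
  is_sqrtm (B *m ctmx B) S ->
  is_sup_nonzero (fun x => complex.Re (qform A x) / complex.Re (qform S x)) alpha ->
  is_min_unit (fun x => vnorm (ctmx B *m x)) beta1 ->
  forall t : R,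
    (-2 * beta1) / (alpha + Num.sqrt (alpha ^+ 2 + 4)) < t < beta1 -> t != 0 ->
    (t%:C)%C \in resolvent (saddle A B).
Proof.
move=> [_ A_ge0] _ [[S_herm S_gt0] S_sqr] [alpha_ub _] beta1_min t t_range t_neq0.
rewrite unfold_in; apply: contraT => /saddle_shift_singular[].
  by rewrite fmorph_eq0.
move=> z z_neq0 eq_z.
have a_gt0 := vnorm_gt0 z_neq0.
have q_ge0 : 0 <= complex.Re (qform A z) by apply/Re_ge0/A_ge0.
have c_gt0 : 0 < complex.Re (qform S z) by apply/Re_gt0/S_gt0.
have q_le : complex.Re (qform A z) <= alpha * complex.Re (qform S z).
  by rewrite -ler_pdivrMr //; apply: alpha_ub.
have alpha_ge0 : 0 <= alpha.
  by apply: le_trans (alpha_ub z z_neq0); rewrite divr_ge0 // ltW.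
have Sz_eq : vnorm (S *m z) = vnorm (ctmx B *m z).
  by apply: vnorm_mulmx_eq; rewrite S_herm S_sqr ctmxK.
have beta1_le := is_min_unit_vnorm_le z beta1_min.
exfalso; apply: (saddle_real_gap a_gt0 q_ge0 _ beta1_le _ t_range t_neq0).
  apply: (le_trans q_le); rewrite ler_wpM2l // -Sz_eq qformE.
  exact: Re_cdot_le.
move/(congr1 (@complex.Re R)): eq_z.
rewrite !qformE !mul1mx !cdot_self_vnorm -rmorphXn -rmorphM.
by rewrite ReD Re_realM.
Qed.
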